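(* Over Łukasiewicz logic Ł, the theory $T_Q$ proves: (1) every bookkeeping formula for $q$-variables valid in the standard MV-algebra, i.e. for all rationals $r,s\in[0,1]$ with chosen representations $r=m/n$, $s=k/l$, and $r*s=p/t$ (with $m\le n$, etc.), and each binary connective $*\in\{\cdot,\to,\oplus,\land,\lor,\equiv\}$, the formula $(q_{m/n} * q_{k/l})\equiv q_{p/t}$, where $r*s$ is computed in $[0,1]_{\text{Ł}}$, and likewise $\neg q_{m/n}\equiv q_{p/t}$ whenever $1-m/n=p/t$; (2) $q_{m/n}\equiv q_{m'/n'}$ whenever $m/n=m'/n'$; (3) $q_{m/n}\equiv\overline1$ whenever $m=n$.
   Context: Łukasiewicz logic Ł is the propositional logic in the connectives $\cdot,\to,\land,\lor,\neg,\oplus,\equiv,\overline0,\overline1$ with modus ponens; it is finitely strongly complete w.r.t. the standard MV-algebra $[0,1]_{\text{Ł}}$ (domain $[0,1]$, $x\cdot y=\max(0,x+y-1)$, $x\to y=\min(1,1-x+y)$, $\neg x=1-x$, $x\oplus y=\min(1,x+y)$, $\land=\min$, $\lor=\max$, $x\equiv y=1-|x-y|$). $x^k$ is the $k$-fold product, $kx$ the $k$-fold $\oplus$-sum. Let $Q=\{q_{m/n}\mid m,n\in\mathbb N,\ m\le n,\ n>0\}$ be propositional variables, one per pair $(m,n)$. The theory $T_Q$ has axioms: $q_{0/n}\equiv\overline0$ for $n>0$; $q_{1/1}\equiv\overline1$; $q_{1/n}\equiv(\neg q_{1/n})^{n-1}$ for $n\ge2$; $q_{m/n}\equiv m\,q_{1/n}$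 for $m\le n$, $n\ge2$. *)

From Stdlib Require Import Reals.
Open Scope R_scope.

(* Formulas: primitive connectives -> and 0bar; the variable [q m n]
   stands for q_{m/n} (only pairs with m <= n, n > 0 are ever used). *)
Inductive form : Type :=
| q : nat -> nat -> form
| bot : form
| imp : form -> form -> form.

Definition fneg (a : form) : form := imp a bot.
Definition ftop : form := fneg bot.
Definition fprod (a b : form) : form := fneg (imp a (fneg b)).
Definition fosum (a b : form) : form := imp (fneg a) b.
Definition fconj (a b : form) : form := fprod a (imp a b).
Definition fdisj (a b : form) : form :=
  fconj (imp (imp a b) b) (imp (imp b a) a).
Definition fequiv (a b : form) : form := fprod (imp a b) (imp b a).

Fixpoint fpow (a : form) (k : nat) : form :=
  match k with
  | O => ftop
  | S O => a
  | S k' => fprod a (fpow a k')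
  end.
Fixpoint fmul (k : nat) (a : form) : form :=
  match k with
  | O => bot
  | S O => a
  | S k' => fosum a (fmul k' a)
  end.

Inductive prov (T : form -> Prop) : form -> Prop :=
| p_ax : forall a, T a -> prov T a
| p_L1 : forall a b, prov T (imp a (imp b a))
| p_L2 : forall a b c, prov T (imp (imp a b) (imp (imp b c) (imp a c)))
| p_L3 : forall a b, prov T (imp (imp (fneg a) (fneg b)) (imp b a))
| p_L4 : forall a b, prov T (imp (imp (imp a b) b) (imp (imp b a) a))
| p_mp : forall a b, prov T a -> prov T (imp a b) -> prov T b.

Inductive TQ : form -> Prop :=
| tq0 : forall n, (0 < n)%nat -> TQ (fequiv (q 0 n) bot)
| tq11 : TQ (fequiv (q 1 1) ftop)
| tq1n : forall n, (2 <= n)%nat -> TQ (fequiv (q 1 n) (fpow (fneg (q 1 n)) (n - 1)))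
| tqmn : forall m n, (m <= n)%nat -> (2 <= n)%nat ->
    TQ (fequiv (q m n) (fmul m (q 1 n))).

Inductive bconn : Type := Cprod | Cimp | Cosum | Cconj | Cdisj | Cequiv.

Definition bsyn (c : bconn) : form -> form -> form :=
  match c with
  | Cprod => fprod | Cimp => imp | Cosum => fosum
  | Cconj => fconj | Cdisj => fdisj | Cequiv => fequiv
  end.

Definition bsem (c : bconn) (x y : R) : R :=
  match c with
  | Cprod => Rmax 0 (x + y - 1)
  | Cimp => Rmin 1 (1 - x + y)
  | Cosum => Rmin 1 (x + y)
  | Cconj => Rmin x y
  | Cdisj => Rmax x y
  | Cequiv => 1 - Rabs (x - y)
  end.

Definition fr (m n : nat) : R := INR m / INR n.

(* In the Lindenbaum algebra of any theory, call e a 1/N-element if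
   e ≡ ¬((N-1)e).  Its multiples 0e, e, ..., Ne then behave exactly like the
   Łukasiewicz chain {0, 1/N, ..., 1}: ie ⊕ je ≡ min(N, i+j)e and
   ¬(ie) ≡ (N-i)e, so every connective of Ł acts on them as on the fractions
   i/N in [0,1].  A 1/N-element is unique up to ≡, hence T_Q proves
   q_{1/n} ≡ d q_{1/dn}, and every q_{m/n} is the multiple (mN/n) q_{1/N}
   for any common denominator N.  Each required equivalence thereby reduces
   to an equality of fractions with denominator N. *)
From Stdlib Require Import Reals Setoid Morphisms Lia Lra.

Open Scope R_scope.

Lemma fr_add a b n : fr (a + b) n = fr a n + fr b n.
Proof. unfold fr. rewrite plus_INR. unfold Rdiv. ring. Qed.

Lemma fr_sub a b n : (b <= a)%nat -> fr (a - b) n = fr a n - fr b n.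
Proof. intros Hba. unfold fr. rewrite minus_INR by exact Hba. unfold Rdiv. ring. Qed.

Lemma fr_diag n : (0 < n)%nat -> fr n n = 1.
Proof. intros Hn. unfold fr. field. apply not_0_INR. lia. Qed.

Lemma fr_mul_l d m n : (0 < d)%nat -> (0 < n)%nat -> fr (d * m) (d * n) = fr m n.
Proof.
  intros Hd Hn. unfold fr. rewrite !mult_INR.
  field. split; apply not_0_INR; lia.
Qed.

Lemma fr_le a b n : (0 < n)%nat -> (a <= b)%nat -> fr a n <= fr b n.
Proof.
  intros Hn Hab. unfold fr, Rdiv. apply Rmult_le_compat_r.
  - left. apply Rinv_0_lt_compat, lt_0_INR, Hn.
  - apply le_INR, Hab.
Qed.

Lemma fr_range k n : (0 < n)%nat -> (k <= n)%nat -> 0 <= fr k n <= 1.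
Proof.
  intros Hn Hk. rewrite <- (fr_diag n Hn).
  replace 0 with (fr 0 n) by (unfold fr; simpl; unfold Rdiv; ring).
  split; apply fr_le; lia.
Qed.

Lemma fr_min a b n : (0 < n)%nat -> fr (Nat.min a b) n = Rmin (fr a n) (fr b n).
Proof.
  intros Hn. destruct (Nat.le_ge_cases a b) as [Hab | Hba].
  - rewrite Nat.min_l, Rmin_left by (auto using fr_le). reflexivity.
  - rewrite Nat.min_r, Rmin_right by (auto using fr_le). reflexivity.
Qed.

Lemma fr_inj a b n : (0 < n)%nat -> fr a n = fr b n -> a = b.
Proof.
  intros Hn H. apply INR_eq. unfold fr in H.
  apply Rmult_eq_reg_r with (/ INR n); [exact H |].
  apply Rinv_neq_0_compat, not_0_INR. lia.
Qed.

Ltac mv_arith :=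
  unfold bsem, Rmin, Rmax, Rabs;
  repeat match goal with
  | |- context [Rle_dec ?a ?b] => destruct (Rle_dec a b)
  | _ : context [Rle_dec ?a ?b] |- _ => destruct (Rle_dec a b)
  | |- context [Rcase_abs ?a] => destruct (Rcase_abs a)
  end; lra.

Section DerivedSemantics.

Variables x y : R.
Hypotheses (Hx : 0 <= x <= 1) (Hy : 0 <= y <= 1).

Lemma bsem_conj_def : bsem Cprod x (bsem Cimp x y) = bsem Cconj x y.
Proof. mv_arith. Qed.

Lemma bsem_disj_def :
  bsem Cconj (bsem Cimp (bsem Cimp x y) y) (bsem Cimp (bsem Cimp y x) x)
  = bsem Cdisj x y.
Proof. mv_arith. Qed.

Lemma bsem_equiv_def : bsem Cprod (bsem Cimp x y) (bsem Cimp y x) = bsem Cequiv x y.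
Proof. mv_arith. Qed.

End DerivedSemantics.

Close Scope R_scope.

Section Lindenbaum.

Variable T : form -> Prop.

Definition le (a b : form) : Prop := prov T (imp a b).
Definition eqv (a b : form) : Prop := le a b /\ le b a.

Lemma le_trans a b c : le a b -> le b c -> le a c.
Proof. intros Hab Hbc. apply (p_mp _ _ _ Hbc), (p_mp _ _ _ Hab), p_L2. Qed.

Lemma le_prov a b : prov T a -> le b a.
Proof. intros Ha. apply (p_mp _ _ _ Ha), p_L1. Qed.

Lemma le_mp a b : prov T a -> le a b -> prov T b.
Proof. intros Ha Hab. exact (p_mp _ _ _ Ha Hab). Qed.

Lemma imp_prov_l t b : prov T t -> le (imp t b) b.
Proof.
  intros Ht. apply (p_mp _ (imp (imp b t) t)); [apply le_prov, Ht | apply p_L4].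
Qed.

Lemma le_refl a : le a a.
Proof.
  eapply le_trans; [apply p_L1 with (b := imp bot (imp bot bot)) |].
  apply imp_prov_l, p_L1.
Qed.

Lemma imp_le_l a b c : le a b -> le (imp b c) (imp a c).
Proof. intros Hab. apply (p_mp _ _ _ Hab), p_L2. Qed.

Lemma le_imp_imp a b : le a (imp (imp a b) b).
Proof. eapply le_trans; [apply p_L1 with (b := imp b a) | apply p_L4]. Qed.

Lemma imp_exch a b c : le (imp a (imp b c)) (imp b (imp a c)).
Proof.
  eapply le_trans; [apply p_L2 with (b := imp b c) (c := c) |].
  apply imp_le_l, le_imp_imp.
Qed.

Lemma imp_le_r a b c : le a b -> le (imp c a) (imp c b).
Proof. intros Hab. apply (p_mp _ _ _ Hab), (p_mp _ _ _ (p_L2 T c a b)), imp_exch. Qed.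

Lemma prov_ftop : prov T ftop.
Proof. apply le_refl. Qed.

Lemma bot_le a : le bot a.
Proof. apply (p_mp _ (imp (fneg a) (fneg bot))); [apply le_prov, le_refl | apply p_L3]. Qed.

Lemma fneg_fneg a : eqv (fneg (fneg a)) a.
Proof.
  split; [| apply le_imp_imp].
  eapply le_trans; [apply p_L4 | apply imp_prov_l, bot_le].
Qed.

Global Instance eqv_Equivalence : Equivalence eqv.
Proof.
  split.
  - intros a. split; apply le_refl.
  - intros a b [Hab Hba]. split; assumption.
  - intros a b c [Hab Hba] [Hbc Hcb]. split; eapply le_trans; eassumption.
Qed.

Global Instance le_PreOrder : PreOrder le.
Proof. split; [exact le_refl | exact le_trans]. Qed.

Global Instance imp_le : Proper (le --> le ==> le) imp.
Proof. intros a a' Ha b b' Hb. eapply le_trans; [apply imp_le_l, Ha | apply imp_le_r, Hb]. Qed.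

Global Instance imp_eqv : Proper (eqv ==> eqv ==> eqv) imp.
Proof. intros a a' [Ha Ha'] b b' [Hb Hb']. split; apply imp_le; assumption. Qed.

Global Instance le_eqv : Proper (eqv ==> eqv ==> iff) le.
Proof.
  intros a a' [Ha Ha'] b b' [Hb Hb'].
  split; intros H.
  - apply (le_trans _ _ _ Ha'), (le_trans _ _ _ H), Hb.
  - apply (le_trans _ _ _ Ha), (le_trans _ _ _ H), Hb'.
Qed.

Global Instance prov_le : Proper (le ==> Basics.impl) (prov T).
Proof. intros a b Hab Ha. exact (le_mp _ _ Ha Hab). Qed.

Global Instance prov_eqv : Proper (eqv ==> iff) (prov T).
Proof. intros a b [Hab Hba]. split; apply prov_le; assumption. Qed.

Global Instance fneg_le : Proper (le --> le) fneg.
Proof. intros a b Hab. unfold fneg. rewrite Hab. reflexivity. Qed.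

Global Instance fneg_eqv : Proper (eqv ==> eqv) fneg.
Proof. intros a b Hab. unfold fneg. rewrite Hab. reflexivity. Qed.

Global Instance fosum_le : Proper (le ==> le ==> le) fosum.
Proof. intros a b Hab c d Hcd. unfold fosum. rewrite Hab, Hcd. reflexivity. Qed.

Global Instance fosum_eqv : Proper (eqv ==> eqv ==> eqv) fosum.
Proof. intros a b Hab c d Hcd. unfold fosum. rewrite Hab, Hcd. reflexivity. Qed.

Global Instance fprod_le : Proper (le ==> le ==> le) fprod.
Proof. intros a b Hab c d Hcd. unfold fprod. rewrite Hab, Hcd. reflexivity. Qed.

Global Instance fprod_eqv : Proper (eqv ==> eqv ==> eqv) fprod.
Proof. intros a b Hab c d Hcd. unfold fprod. rewrite Hab, Hcd. reflexivity. Qed.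

Global Instance fmul_eqv k : Proper (eqv ==> eqv) (fmul k).
Proof.
  intros a b Hab. induction k as [| [| k] IH]; simpl; try reflexivity; [exact Hab |].
  rewrite Hab, IH. reflexivity.
Qed.

Lemma imp_contra a b : eqv (imp a b) (imp (fneg b) (fneg a)).
Proof. split; [apply p_L2 | apply p_L3]. Qed.

Lemma le_contra a b : le a b <-> le (fneg b) (fneg a).
Proof. unfold le at 1. rewrite imp_contra. reflexivity. Qed.

Lemma imp_exch_eqv a b c : eqv (imp a (imp b c)) (imp b (imp a c)).
Proof. split; apply imp_exch. Qed.

Lemma prov_eqv_ftop a : prov T a -> eqv a ftop.
Proof. intros Ha. split; apply le_prov; [apply prov_ftop | exact Ha]. Qed.

Lemma eqv_ftop_prov a : eqv a ftop -> prov T a.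
Proof. intros Ha. rewrite Ha. apply prov_ftop. Qed.

Lemma imp_ftop_l a : eqv (imp ftop a) a.
Proof. split; [apply imp_prov_l, prov_ftop | apply p_L1]. Qed.

Lemma imp_fosum a b : eqv (imp a b) (fosum (fneg a) b).
Proof. unfold fosum. rewrite fneg_fneg. reflexivity. Qed.

Lemma fosumC a b : eqv (fosum a b) (fosum b a).
Proof. unfold fosum. rewrite imp_contra, fneg_fneg. reflexivity. Qed.

Lemma fosumA a b c : eqv (fosum a (fosum b c)) (fosum (fosum a b) c).
Proof.
  unfold fosum. rewrite (imp_contra (fneg (imp (fneg a) b)) c), fneg_fneg.
  rewrite (imp_exch_eqv (fneg c)), (imp_contra (fneg c) b), fneg_fneg. reflexivity.
Qed.

Lemma fosum_bot_r a : eqv (fosum a bot) a.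
Proof. apply fneg_fneg. Qed.

Lemma fosum_bot_l a : eqv (fosum bot a) a.
Proof. apply imp_ftop_l. Qed.

Lemma fosum_ftop_l a : eqv (fosum ftop a) ftop.
Proof. rewrite fosumC. apply prov_eqv_ftop, le_prov, prov_ftop. Qed.

Lemma fosum_fneg_l a : eqv (fosum (fneg a) a) ftop.
Proof. apply prov_eqv_ftop, (fneg_fneg a). Qed.

Lemma le_fosum_l a b : le a (fosum a b).
Proof. apply (p_mp _ _ _ (imp_le_r _ _ a (bot_le b))), imp_exch. Qed.

Lemma fneg_fosum a b : eqv (fneg (fosum a b)) (fprod (fneg a) (fneg b)).
Proof. unfold fprod, fosum. rewrite (fneg_fneg b). reflexivity. Qed.

Lemma fprod_fosum a b : eqv (fprod a b) (fneg (fosum (fneg a) (fneg b))).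
Proof. unfold fprod, fosum. rewrite fneg_fneg. reflexivity. Qed.

Lemma fprodC a b : eqv (fprod a b) (fprod b a).
Proof. rewrite !fprod_fosum, fosumC. reflexivity. Qed.

Lemma fprodA a b c : eqv (fprod a (fprod b c)) (fprod (fprod a b) c).
Proof. rewrite !fprod_fosum, !fneg_fneg, fosumA. reflexivity. Qed.

Lemma fprod_ftop_r a : eqv (fprod a ftop) a.
Proof.
  rewrite fprod_fosum. unfold ftop. rewrite fneg_fneg, fosum_bot_r. apply fneg_fneg.
Qed.

Lemma fprod_le_l a b : le (fprod a b) a.
Proof. rewrite fprod_fosum, le_contra, fneg_fneg. apply le_fosum_l. Qed.

Lemma fprod_le_r a b : le (fprod a b) b.
Proof. rewrite fprodC. apply fprod_le_l. Qed.

Lemma fprod_residual a b c : le (fprod a b) c <-> le b (imp a c).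
Proof.
  unfold fprod. rewrite le_contra, fneg_fneg.
  unfold le. rewrite imp_exch_eqv, <- imp_contra, imp_exch_eqv. reflexivity.
Qed.

Lemma le_fneg_bot a b : le a b <-> eqv (fprod a (fneg b)) bot.
Proof.
  unfold fprod. rewrite fneg_fneg. split; intros H.
  - rewrite (prov_eqv_ftop _ H). apply fneg_fneg.
  - apply eqv_ftop_prov. rewrite <- (fneg_fneg (imp a b)), H. reflexivity.
Qed.

Lemma prov_fequiv a b : prov T (fequiv a b) <-> eqv a b.
Proof.
  split.
  - intros H. split; eapply le_mp; [exact H | apply fprod_le_l | exact H | apply fprod_le_r].
  - intros [Hab Hba]. apply eqv_ftop_prov. unfold fequiv.
    rewrite (prov_eqv_ftop _ Hab), (prov_eqv_ftop _ Hba). apply fprod_ftop_r.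
Qed.

Lemma join_def a b : eqv (fosum (fprod a (fneg b)) b) (imp (imp a b) b).
Proof. unfold fosum, fprod. rewrite !fneg_fneg. reflexivity. Qed.

Lemma joinC a b : eqv (imp (imp a b) b) (imp (imp b a) a).
Proof. split; apply p_L4. Qed.

Lemma join_le a b : le a b -> eqv (imp (imp a b) b) b.
Proof. intros Hab. rewrite (prov_eqv_ftop _ Hab). apply imp_ftop_l. Qed.

Lemma meetC a b : eqv (fprod a (imp a b)) (fprod b (imp b a)).
Proof.
  unfold fprod. apply fneg_eqv.
  change (eqv (imp a (imp (imp a b) bot)) (imp b (imp (imp b a) bot))).
  rewrite (imp_exch_eqv a), (imp_exch_eqv b).
  change (eqv (imp (imp a b) (fneg a)) (imp (imp b a) (fneg b))).
  rewrite (imp_contra a b), (imp_contra b a). apply joinC.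
Qed.

Definition orth (a b : form) : Prop := le a (fneg b).

Global Instance orth_eqv : Proper (eqv ==> eqv ==> iff) orth.
Proof. intros a a' Ha b b' Hb. unfold orth. rewrite Ha, Hb. reflexivity. Qed.

Lemma orth_sym a b : orth a b -> orth b a.
Proof. unfold orth. intros H. apply le_contra. rewrite fneg_fneg. exact H. Qed.

Lemma fosum_fneg_cancel a b : orth a b -> eqv (fprod (fosum a b) (fneg b)) a.
Proof.
  intros H. rewrite fprodC, fosumC.
  change (fosum b a) with (imp (fneg b) a).
  rewrite meetC, (prov_eqv_ftop _ H). apply fprod_ftop_r.
Qed.

Lemma orth_fosum_r a b c : orth a b -> orth (fosum a b) c -> orth a (fosum b c).
Proof.
  unfold orth. intros Hab Habc. rewrite <- (fosum_fneg_cancel a b Hab).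
  rewrite fneg_fosum, fprodC. apply fprod_le; [reflexivity | exact Habc].
Qed.

Lemma orth_fosum_l a b c : orth b c -> orth a (fosum b c) -> orth (fosum a b) c.
Proof.
  intros Hbc Habc. apply orth_sym. rewrite fosumC.
  apply orth_fosum_r; [apply orth_sym, Hbc |].
  rewrite fosumC. apply orth_sym, Habc.
Qed.

Lemma fmul_S k a : eqv (fmul (S k) a) (fosum a (fmul k a)).
Proof. destruct k; simpl; [symmetry; apply fosum_bot_r | reflexivity]. Qed.

Lemma fmul_add i j a : eqv (fmul (i + j) a) (fosum (fmul i a) (fmul j a)).
Proof.
  induction i as [| i IH]; simpl plus.
  - symmetry. apply fosum_bot_l.
  - rewrite !fmul_S, IH. apply fosumA.
Qed.

Lemma fmul_mul i j a : eqv (fmul (i * j) a) (fmul i (fmul j a)).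
Proof.
  induction i as [| i IH]; simpl mult; [reflexivity |].
  rewrite fmul_add, IH, fmul_S. reflexivity.
Qed.

Lemma fmul_le i j a : (i <= j)%nat -> le (fmul i a) (fmul j a).
Proof.
  intros Hij. replace j with (i + (j - i))%nat by lia.
  rewrite fmul_add. apply le_fosum_l.
Qed.

Lemma fpow_fneg k a : eqv (fpow (fneg a) k) (fneg (fmul k a)).
Proof.
  induction k as [| [| k] IH]; try reflexivity.
  change (eqv (fprod (fneg a) (fpow (fneg a) (S k))) (fneg (fosum a (fmul (S k) a)))).
  rewrite IH, fneg_fosum. reflexivity.
Qed.

Lemma fprod_fneg_residual a b c : le (fprod a (fneg b)) c <-> le a (fosum b c).
Proof. rewrite fprodC, fprod_residual. reflexivity. Qed.

Lemma fosum_swap a b c d :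
  eqv (fosum (fosum a b) (fosum c d)) (fosum (fosum a c) (fosum b d)).
Proof. rewrite <- !fosumA, (fosumA b c), (fosumC b c), <- fosumA. reflexivity. Qed.

Lemma le_fosum_fprod_fneg a b : le a (fosum b (fprod a (fneg b))).
Proof. rewrite fosumC, join_def. apply le_imp_imp. Qed.

Lemma fprod_fneg_fosum a b c d :
  le (fprod (fosum a b) (fneg (fosum c d)))
     (fosum (fprod a (fneg c)) (fprod b (fneg d))).
Proof.
  apply fprod_fneg_residual. rewrite fosum_swap.
  apply fosum_le; apply le_fosum_fprod_fneg.
Qed.

Lemma fprod_fneg_fmul k a b :
  le (fprod (fmul k a) (fneg (fmul k b))) (fmul k (fprod a (fneg b))).
Proof.
  induction k as [| k IH]; [apply fprod_le_l |].
  rewrite !fmul_S. eapply le_trans; [apply fprod_fneg_fosum |].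
  apply fosum_le; [reflexivity | exact IH].
Qed.

(* b splits as (b ⊖ a ⊙ b) ⊕ a ⊙ b, and a ⊕ (b ⊖ a ⊙ b) = a ⊕ b. *)
Lemma fosum_fprod_absorb a b : eqv (fosum (fosum a b) (fprod a b)) (fosum a b).
Proof.
  split; [| apply le_fosum_l].
  set (w := fprod a b).
  set (r := fprod b (fneg w)).
  assert (Hb : eqv b (fosum r w)).
  { unfold r. rewrite join_def, joinC. symmetry. apply join_le, fprod_le_r. }
  assert (Hr : eqv r (fprod (fneg a) (imp (fneg a) b))).
  { rewrite meetC. unfold r, w. apply fprod_eqv; [reflexivity |].
    unfold fprod. rewrite fneg_fneg. apply imp_exch_eqv. }
  assert (Har : eqv (fosum a r) (fosum a b)).
  { rewrite Hr.
    change (imp (fneg a) b) with (fosum a b).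
    rewrite fosumC, fprodC, join_def, joinC. apply join_le, le_fosum_l. }
  rewrite <- Har at 1. rewrite <- fosumA, <- Hb. reflexivity.
Qed.

Lemma fprod_fneg_disjoint a b :
  eqv (fprod (fprod a (fneg b)) (fneg (fprod b (fneg a)))) (fprod a (fneg b)).
Proof.
  rewrite !fprod_fosum, !fneg_fneg, (fosumC (fneg b) a).
  rewrite fosum_fprod_absorb. reflexivity.
Qed.

Lemma fprod_fneg_fmul_fixed k a b :
  eqv (fprod a (fneg b)) a -> eqv (fprod a (fneg (fmul k b))) a.
Proof.
  intros H. induction k as [| k IH]; [apply fprod_ftop_r |].
  rewrite fmul_S, fneg_fosum, fprodA, H. exact IH.
Qed.

Definition one_nth (N : nat) (e : form) : Prop := eqv e (fneg (fmul (N - 1) e)).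

Section Chain.

Variables (N : nat) (e : form).
Hypotheses (HN : (0 < N)%nat) (He : one_nth N e).
Let He_eqv : eqv e (fneg (fmul (N - 1) e)) := He.

Lemma fmul_N_ftop : eqv (fmul N e) ftop.
Proof.
  replace N with (S (N - 1)) at 1 by lia.
  rewrite fmul_S, He_eqv at 1. apply fosum_fneg_l.
Qed.

Lemma orth_fmul i j : (i + j <= N)%nat -> orth (fmul i e) (fmul j e).
Proof.
  revert j. induction i as [| i IH]; intros j Hij; [apply bot_le |].
  rewrite fmul_S. apply orth_fosum_l; [apply IH; lia |].
  unfold orth. rewrite <- fmul_add, He_eqv at 1. apply fneg_le, fmul_le. lia.
Qed.

Lemma fneg_fmul i : (i <= N)%nat -> eqv (fneg (fmul i e)) (fmul (N - i) e).
Proof.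
  intros Hi. split.
  - apply eqv_ftop_prov.
    change (eqv (fosum (fmul i e) (fmul (N - i) e)) ftop). rewrite <- fmul_add.
    replace (i + (N - i))%nat with N by lia. apply fmul_N_ftop.
  - apply orth_fmul. lia.
Qed.

Lemma fosum_fmul i j : eqv (fosum (fmul i e) (fmul j e)) (fmul (Nat.min N (i + j)) e).
Proof.
  rewrite <- fmul_add. destruct (Nat.le_ge_cases (i + j) N) as [Hle | Hge].
  - rewrite Nat.min_r by exact Hle. reflexivity.
  - rewrite Nat.min_l by exact Hge.
    replace (i + j)%nat with (N + (i + j - N))%nat by lia.
    rewrite fmul_add, fmul_N_ftop. apply fosum_ftop_l.
Qed.

Definition has_value (a : form) (x : R) : Prop :=
  exists k, (k <= N)%nat /\ x = fr k N /\ eqv a (fmul k e).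

Global Instance has_value_eqv : Proper (eqv ==> eq ==> iff) has_value.
Proof.
  intros a b Hab x y <-.
  split; intros [k [Hk [Hx Hk_e]]]; exists k; (split; [exact Hk | split; [exact Hx |]]).
  - rewrite <- Hab. exact Hk_e.
  - rewrite Hab. exact Hk_e.
Qed.

Lemma has_value_range a x : has_value a x -> (0 <= x <= 1)%R.
Proof. intros [k [Hk [-> _]]]. apply fr_range; assumption. Qed.

Lemma has_value_fneg a x : has_value a x -> has_value (fneg a) (1 - x)%R.
Proof.
  intros [k [Hk [-> Ha]]]. exists (N - k)%nat. split; [lia | split].
  - rewrite fr_sub, fr_diag by assumption. reflexivity.
  - rewrite Ha. apply fneg_fmul, Hk.
Qed.

Lemma has_value_fosum a b x y :
  has_value a x -> has_value b y -> has_value (fosum a b) (Rmin 1 (x + y)).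
Proof.
  intros [i [Hi [-> Ha]]] [j [Hj [-> Hb]]].
  exists (Nat.min N (i + j)). split; [lia | split].
  - rewrite fr_min, fr_diag, fr_add by assumption. reflexivity.
  - rewrite Ha, Hb. apply fosum_fmul.
Qed.

Lemma has_value_imp a b x y :
  has_value a x -> has_value b y -> has_value (imp a b) (bsem Cimp x y).
Proof.
  intros Ha Hb. rewrite imp_fosum. cbn [bsem].
  apply has_value_fosum; [apply has_value_fneg |]; assumption.
Qed.

Lemma has_value_fprod a b x y :
  has_value a x -> has_value b y -> has_value (fprod a b) (bsem Cprod x y).
Proof.
  intros Ha Hb.
  replace (bsem Cprod x y) with (1 - bsem Cimp x (1 - y))%R by mv_arith.
  apply has_value_fneg, has_value_imp, has_value_fneg; assumption.
Qed.

Lemma has_value_fconj a b x y :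
  has_value a x -> has_value b y -> has_value (fconj a b) (bsem Cconj x y).
Proof.
  intros Ha Hb.
  rewrite <- bsem_conj_def by (eapply has_value_range; eassumption).
  apply has_value_fprod; [| apply has_value_imp]; assumption.
Qed.

Lemma has_value_bsyn c a b x y :
  has_value a x -> has_value b y -> has_value (bsyn c a b) (bsem c x y).
Proof.
  intros Ha Hb.
  assert (Hx := has_value_range _ _ Ha). assert (Hy := has_value_range _ _ Hb).
  destruct c; cbn [bsyn].
  - apply has_value_fprod; assumption.
  - apply has_value_imp; assumption.
  - apply has_value_fosum; assumption.
  - apply has_value_fconj; assumption.
  - rewrite <- bsem_disj_def by assumption.
    apply has_value_fconj; apply has_value_imp; auto using has_value_imp.
  - rewrite <- bsem_equiv_def by assumption.
    apply has_value_fprod; apply has_value_imp; assumption.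
Qed.

Lemma has_value_unique a b x : has_value a x -> has_value b x -> eqv a b.
Proof.
  intros [i [_ [Hi Ha]]] [j [_ [Hj Hb]]].
  replace j with i in Hb by (apply (fr_inj i j N HN); congruence).
  rewrite Ha, Hb. reflexivity.
Qed.

End Chain.

(* a := x ⊖ y lies below (n-1)(y ⊖ x), yet a ⊖ (y ⊖ x) = a, so a = 0. *)
Lemma one_nth_le n x y : (0 < n)%nat -> one_nth n x -> one_nth n y -> le x y.
Proof.
  intros Hn Hx Hy. apply le_fneg_bot.
  assert (Hny : eqv (fneg y) (fmul (n - 1) y)) by exact (fneg_fmul n y Hn Hy 1 Hn).
  assert (Hle : le (fprod x (fneg y)) (fmul (n - 1) (fprod y (fneg x)))).
  { rewrite (Hx : eqv _ _) at 1. rewrite Hny, fprodC. apply fprod_fneg_fmul. }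
  apply le_fneg_bot in Hle. rewrite <- Hle. symmetry.
  apply fprod_fneg_fmul_fixed, fprod_fneg_disjoint.
Qed.

Lemma one_nth_unique n x y : (0 < n)%nat -> one_nth n x -> one_nth n y -> eqv x y.
Proof. intros Hn Hx Hy. split; apply (one_nth_le n); assumption. Qed.

Lemma one_nth_fmul n d e :
  (0 < n)%nat -> (0 < d)%nat -> one_nth (d * n) e -> one_nth n (fmul d e).
Proof.
  intros Hn Hd He. unfold one_nth.
  rewrite <- fmul_mul, (fneg_fmul (d * n) e ltac:(nia) He) by nia.
  replace (d * n - (n - 1) * d)%nat with d by nia. reflexivity.
Qed.

End Lindenbaum.

Lemma q1_one_nth n : (0 < n)%nat -> one_nth TQ n (q 1 n).
Proof.
  intros Hn. unfold one_nth. destruct (Nat.eq_dec n 1) as [-> | Hn1].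
  - apply prov_fequiv, p_ax, tq11.
  - rewrite <- fpow_fneg. apply prov_fequiv, p_ax, tq1n. lia.
Qed.

Lemma q_eqv_fmul m n : (0 < n)%nat -> (m <= n)%nat -> eqv TQ (q m n) (fmul m (q 1 n)).
Proof.
  intros Hn Hm. destruct (Nat.eq_dec n 1) as [-> | Hn1].
  - destruct m as [| [| m]]; [apply prov_fequiv, p_ax, tq0; lia | reflexivity | lia].
  - apply prov_fequiv, p_ax, tqmn; lia.
Qed.

Lemma q1_eqv_fmul n d : (0 < n)%nat -> (0 < d)%nat -> eqv TQ (q 1 n) (fmul d (q 1 (d * n))).
Proof.
  intros Hn Hd. apply (one_nth_unique TQ n); [exact Hn | apply q1_one_nth, Hn |].
  apply one_nth_fmul; [exact Hn | exact Hd | apply q1_one_nth; nia].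
Qed.

Lemma has_value_q N m n : (0 < N)%nat -> (0 < n)%nat -> (m <= n)%nat -> Nat.divide n N ->
  has_value TQ N (q 1 N) (q m n) (fr m n).
Proof.
  intros HN Hn Hm [d ->]. exists (m * d)%nat. split; [nia | split].
  - rewrite Nat.mul_comm, fr_mul_l by nia. reflexivity.
  - rewrite q_eqv_fmul, (q1_eqv_fmul n d), fmul_mul by nia. reflexivity.
Qed.

Open Scope R_scope.

Theorem lemma3p4 :
  (forall (c : bconn) (m n k l p t : nat),
      (0 < n)%nat -> (m <= n)%nat ->
      (0 < l)%nat -> (k <= l)%nat ->
      (0 < t)%nat -> (p <= t)%nat ->
      bsem c (fr m n) (fr k l) = fr p t ->
      prov TQ (fequiv (bsyn c (q m n) (q k l)) (q p t)))
  /\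
  (forall (m n p t : nat),
      (0 < n)%nat -> (m <= n)%nat ->
      (0 < t)%nat -> (p <= t)%nat ->
      1 - fr m n = fr p t ->
      prov TQ (fequiv (fneg (q m n)) (q p t)))
  /\
  (forall (m n m' n' : nat),
      (0 < n)%nat -> (m <= n)%nat ->
      (0 < n')%nat -> (m' <= n')%nat ->
      fr m n = fr m' n' ->
      prov TQ (fequiv (q m n) (q m' n')))
  /\
  (forall (n : nat), (0 < n)%nat ->
      prov TQ (fequiv (q n n) ftop)).
Proof.
  split; [| split; [| split]].
  - intros c m n k l p t Hn Hm Hl Hk Ht Hp Hsem.
    set (N := (n * l * t)%nat).
    assert (HN : (0 < N)%nat) by (unfold N; nia).
    apply prov_fequiv, (has_value_unique TQ N (q 1 N) HN) with (fr p t).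
    + rewrite <- Hsem. apply (has_value_bsyn TQ N _ HN (q1_one_nth N HN));
        apply has_value_q; auto; [exists (l * t)%nat | exists (n * t)%nat]; unfold N; lia.
    + apply has_value_q; auto. exists (n * l)%nat. unfold N; lia.
  - intros m n p t Hn Hm Ht Hp Hsem.
    set (N := (n * t)%nat).
    assert (HN : (0 < N)%nat) by (unfold N; nia).
    apply prov_fequiv, (has_value_unique TQ N (q 1 N) HN) with (fr p t).
    + rewrite <- Hsem. apply (has_value_fneg TQ N _ HN (q1_one_nth N HN)).
      apply has_value_q; auto. exists t. unfold N; lia.
    + apply has_value_q; auto. exists n. unfold N; lia.
  - intros m n m' n' Hn Hm Hn' Hm' Hsem.
    set (N := (n * n')%nat).
    assert (HN : (0 < N)%nat) by (unfold N; nia).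
    apply prov_fequiv, (has_value_unique TQ N (q 1 N) HN) with (fr m' n').
    + rewrite <- Hsem. apply has_value_q; auto. exists n'. unfold N; lia.
    + apply has_value_q; auto. exists n. unfold N; lia.
  - intros n Hn. apply prov_fequiv. rewrite q_eqv_fmul by lia.
    apply (fmul_N_ftop TQ n _ Hn), q1_one_nth, Hn.
Qed.
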